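(* Let $\mu,\nu$ be Borel probability measures on $[0,1)$ with $\nu$ dyadically doubling ($\nu(\hat I)\le D_\nu\nu(I)$ for $I\in\mathcal{D}\setminus\{[0,1)\}$). Let $I_0=[0,1)\supset I_1\supset I_2\supset\cdots$ be nested intervals with $I_j\in\mathcal{D}$ of length $2^{-j}$, and for $j\ge0$ let $\psi_j\colon\mathbb{R}\to[0,\infty)$ be $L_j$-Lipschitz and supported on $\overline{I_j}$, such that $\Psi := \sum_{j\ge0}\psi_j$ is bounded. Set $\Psi_k := \sum_{j\ge k}\psi_j$. Then for every $N\in\{0,1,2,\ldots\}\cup\{\infty\}$, $$\Big|\int\Psi\,d\mu-\int\Psi\,d\nu\Big|\le\sum_{k=0}^N\frac{L_k}{2^k}\alpha_{\mu,\nu}(I_k)\mu(I_k)+\sum_{k=0}^N\Big(\frac{1}{\nu(I_{k+1})}\int\Psi_{k+1}\,d\nu\Big)\Delta_{\mu,\nu}(I_k)\mu(I_k)+2\|\Psi\|_\infty\,\mu(I_{N+1}),$$ where for $N=\infty$, $I_{N+1}$ means $\bigcap_j I_j$.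
   Context: $\mathcal{D}$: dyadic intervals $[j2^{-k},(j+1)2^{-k})\subset[0,1)$, $k\ge0$; $\hat I$ is the parent of $I$, and $I_-$ is the left half of $I$. $\Delta_{\mu,\nu}(I) := |\mu(I_-)/\mu(I)-\nu(I_-)/\nu(I)|$, with the convention that $\Delta_{\mu,\nu}(I)\mu(I):=0$ if $\mu(I)=0$. Wasserstein distance: $\mathbb{W}_1(\nu_1,\nu_2) := \sup_\psi |\int\psi\,d\nu_1 - \int\psi\,d\nu_2|$ over all $1$-Lipschitz $\psi\colon\mathbb{R}\to\mathbb{R}$ supported on $[0,1]$. $T_I$ is the increasing affine map from $\overline I$ onto $[0,1]$, $\mu_I := T_{I\sharp}(\mu|_I)/\mu(I)$, $\nu_I := T_{I\sharp}(\nu|_I)/\nu(I)$ (zero if the mass vanishes), $\alpha_{\mu,\nu}(I) := \mathbb{W}_1(\mu_I,\nu_I)$. *)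

From HB Require Import structures.
From mathcomp Require Import all_boot all_order all_algebra.
From mathcomp Require Import all_classical all_reals all_analysis.
Set Implicit Arguments. Unset Strict Implicit. Unset Printing Implicit Defensive.
Import Order.TTheory GRing.Theory Num.Theory.
Import numFieldNormedType.Exports.
Local Open Scope classical_set_scope.
Local Open Scope ring_scope.

Section Defs.
Variable R : realType.

(* the dyadic interval [m 2^-k, (m+1) 2^-k) ; it lies in [0,1) iff m < 2^k *)
Definition dyadic (k m : nat) : set R :=
  [set x : R | (m%:R / 2 ^+ k <= x) && (x < m.+1%:R / 2 ^+ k)].

Definition mR (mu : set R -> \bar R) (A : set R) : R := fine (mu A).

(* Delta_{mu,nu}(I) for I = dyadic k m; its left half I_- is dyadic k.+1 (2m).
   Division by 0 is 0 in MathComp, so Delta(I) * mu(I) = 0 when mu(I) = 0. *)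
Definition Delta (mu nu : probability R R) (k m : nat) : R :=
  `| mR mu (dyadic k.+1 m.*2) / mR mu (dyadic k m)
   - mR nu (dyadic k.+1 m.*2) / mR nu (dyadic k m) |.

Definition W1_test (psi : R -> R) : Prop :=
  (forall x y : R, `|psi x - psi y| <= `|x - y|) /\
  (forall x : R, ~ (0 <= x <= 1) -> psi x = 0).

(* integral of psi against mu_I = T_I#(mu|_I)/mu(I), I = dyadic k m,
   T_I x = 2^k x - m (increasing affine map from closure I onto [0,1]);
   by definition of the push-forward this is
   mu(I)^-1 * \int_I psi(T_I x) dmu(x)   (and 0 if mu(I) = 0). *)
Definition int_local (mu : probability R R) (k m : nat) (psi : R -> R) : R :=
  (mR mu (dyadic k m))^-1 *
  fine (\int[mu]_(x in dyadic k m) (psi (2 ^+ k * x - m%:R))%:E)%E.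

(* alpha_{mu,nu}(I) = W_1(mu_I, nu_I) *)
Definition alpha (mu nu : probability R R) (k m : nat) : R :=
  sup [set `|int_local mu k m psi - int_local nu k m psi| | psi in W1_test].

Definition Psi_from (psi : nat -> R -> R) (k : nat) (x : R) : R :=
  fine (\sum_(k <= j <oo) (psi j x)%:E)%E.

Definition supnorm (f : R -> R) : R := sup [set `|f x| | x in [set: R]].

Definition intR (mu : probability R R) (f : R -> R) : R :=
  fine (\int[mu]_x (f x)%:E)%E.

End Defs.

(* Put r_k := mu(I_k) / nu(I_k) (the doubling condition forces nu(I) > 0 on every
   dyadic I) and consider the gap A_k := \int Psi_k dmu - r_k \int Psi_k dnu, so that
   A_0 is the difference to be bounded. Splitting Psi_k = psi_k + Psi_(k+1) gives
     A_k = (\int psi_k dmu - r_k \int psi_k dnu) + (r_(k+1) - r_k) \int Psi_(k+1) dnu + A_(k+1).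
   Transported to [0,1] by T_(I_k) and divided by L_k 2^-k, psi_k becomes a W_1 test
   function, which bounds the first term by L_k 2^-k alpha(I_k) mu(I_k); as I_(k+1) is a
   half of I_k, |r_(k+1) - r_k| = Delta(I_k) mu(I_k) / nu(I_(k+1)). Telescoping up to N
   and |A_(N+1)| <= 2 |Psi|_oo mu(I_(N+1)), because Psi_(N+1) vanishes off I_(N+1), give
   the finite bound; for N = oo, mu(I_(N+1)) tends to mu(\bigcap_j I_j) by continuity
   from above. *)

From HB Require Import structures.
From mathcomp Require Import all_boot all_order all_algebra.
From mathcomp Require Import all_classical all_reals all_analysis.
From mathcomp Require Import ring lra zify measurable_realfun.
Set Implicit Arguments. Unset Strict Implicit. Unset Printing Implicit Defensive.
Import Order.TTheory GRing.Theory Num.Theory.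
Import numFieldNormedType.Exports.
Local Open Scope classical_set_scope.
Local Open Scope ring_scope.

Section Lipschitz.
Variables (R : realType) (f : R -> R) (L : R).
Hypothesis f_lip : forall x y, `|f x - f y| <= L * `|x - y|.

Lemma lipschitz_ge0 : 0 <= L.
Proof. by have := f_lip 0 1; rewrite sub0r normrN normr1 mulr1; apply: le_trans. Qed.

Lemma lipschitz_continuous : continuous f.
Proof.
move=> x; apply/cvgrPdist_lt => e e0.
have L1_gt0 : 0 < L + 1 by rewrite ltr_wpDl // lipschitz_ge0.
near=> y; apply: le_lt_trans (f_lip x y) _.
apply: (le_lt_trans (y := (L + 1) * `|x - y|)).
  by rewrite ler_wpM2r // lerDl.
rewrite -ltr_pdivlMl //; near: y; apply: cvgr_dist_lt => //.
by rewrite mulr_gt0 // invr_gt0.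
Unshelve. all: by end_near. Qed.

Lemma lipschitz_measurable : measurable_fun setT f.
Proof. exact: continuous_measurable_fun lipschitz_continuous. Qed.

Lemma lipschitz_eq0_right b : (forall x, b < x -> f x = 0) -> f b = 0.
Proof.
move=> f0; apply/normr0_eq0/eqP; rewrite eq_le normr_ge0 andbT.
apply/ler_addgt0Pr => e e_gt0; rewrite add0r.
have L1_gt0 : 0 < L + 1 by rewrite ltr_wpDl // lipschitz_ge0.
have d_gt0 : 0 < e / (L + 1) by rewrite divr_gt0.
have := f_lip b (b + e / (L + 1)); rewrite (f0 (b + _)) ?ltrDl // subr0 => /le_trans; apply.
rewrite opprD addrA subrr sub0r normrN gtr0_norm // mulrA ler_pdivrMr //.
by rewrite mulrC ler_pM2l // lerDl.
Qed.

End Lipschitz.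

Section Dyadic.
Context {R : realType}.
Local Notation dyadic := (@dyadic R).

Lemma dyadicE k m : dyadic k m = `[m%:R / 2 ^+ k, m.+1%:R / 2 ^+ k[%classic.
Proof. by apply/seteqP; split => x /=; rewrite in_itv. Qed.

Lemma measurable_dyadic k m : measurable (dyadic k m).
Proof. by rewrite dyadicE; exact: measurable_itv. Qed.

Lemma closure_dyadic k m :
  closure (dyadic k m) `<=` `[m%:R / 2 ^+ k, m.+1%:R / 2 ^+ k]%classic.
Proof.
have sub : dyadic k m `<=` `[m%:R / 2 ^+ k, m.+1%:R / 2 ^+ k]%classic.
  by rewrite dyadicE => x /=; rewrite !in_itv /= => /andP[-> /ltW ->].
move=> x /(closureS sub); rewrite -(closure_id _).1 //; exact: interval_closed.
Qed.

Lemma lipschitz_dyadic_support (f : R -> R) L k m :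
  (forall x y, `|f x - f y| <= L * `|x - y|) ->
  (forall x, ~ closure (dyadic k m) x -> f x = 0) ->
  forall x, ~ dyadic k m x -> f x = 0.
Proof.
move=> f_lip f_supp x x_out; have [x_lt|x_ge] := ltP x (m%:R / 2 ^+ k).
  by apply: f_supp => /closure_dyadic /=; rewrite in_itv /= leNgt x_lt.
apply: (lipschitz_eq0_right f_lip) => y xy; apply: f_supp => /closure_dyadic /=.
rewrite in_itv /= => /andP[_ y_le]; apply: x_out; rewrite /dyadic /= x_ge /=.
exact: lt_le_trans xy y_le.
Qed.

Lemma dyadic_ends k m :
  (m%:R / 2 ^+ k = m.*2%:R / 2 ^+ k.+1 :> R) /\
  (m.+1%:R / 2 ^+ k = m.*2.+2%:R / 2 ^+ k.+1 :> R).
Proof.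
have t0 : (2 : R) ^+ k != 0 by rewrite expf_neq0.
by rewrite -doubleS -!muln2 !natrM exprS; split; field.
Qed.

Lemma dyadicU k m : dyadic k m = dyadic k.+1 m.*2 `|` dyadic k.+1 m.*2.+1.
Proof.
rewrite !dyadicE; have [-> ->] := dyadic_ends k m.
by apply: itv_bndbnd_setU; rewrite bnd_simp ler_pM2r ?invr_gt0 ?exprn_gt0 ?ler_nat.
Qed.

Lemma dyadicI k m : dyadic k.+1 m.*2 `&` dyadic k.+1 m.*2.+1 = set0.
Proof.
apply/seteqP; split => x //= [/andP[_ x_lt] /andP[x_ge _]].
by move: (lt_le_trans x_lt x_ge); rewrite ltxx.
Qed.

Lemma dyadic_subset_half k m m' : dyadic k.+1 m' `<=` dyadic k m -> m'./2 = m.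
Proof.
have t_gt0 : 0 < ((2 : R) ^+ k.+1)^-1 by rewrite invr_gt0 exprn_gt0.
move=> /(_ (m'%:R / 2 ^+ k.+1)); rewrite /dyadic /=; have [-> ->] := dyadic_ends k m.
rewrite lexx /= !ltr_pM2r // !ler_pM2r // !ltr_nat ler_nat ltnSn.
by move=> /(_ isT) /andP[le_m lt_m]; rewrite -divn2; lia.
Qed.

Lemma dyadic_chain_subset (c : nat -> nat) :
  (forall j, dyadic j.+1 (c j.+1) `<=` dyadic j (c j)) ->
  {homo (fun j => dyadic j (c j)) : k n / (k <= n)%N >-> n `<=` k}.
Proof.
move=> c_nest k n; elim: n => [|n IH]; first by rewrite leqn0 => /eqP ->.
by rewrite leq_eqVlt => /predU1P[-> //|/IH sub_nk] x /c_nest /sub_nk.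
Qed.

End Dyadic.

Section Masses.
Variables (R : realType) (mu : probability R R).
Local Notation dyadic := (@dyadic R).

Lemma mR_ge0 A : 0 <= mR mu A.
Proof. exact: fine_ge0. Qed.

Lemma mRE A : measurable A -> (mR mu A)%:E = mu A.
Proof. by move=> mA; rewrite /mR fineK // fin_num_measure. Qed.

Lemma mR_dyadicU k m :
  mR mu (dyadic k m) = mR mu (dyadic k.+1 m.*2) + mR mu (dyadic k.+1 m.*2.+1).
Proof.
have mD := @measurable_dyadic R.
apply: EFin_inj; rewrite EFinD !mRE // (dyadicU k m).
exact: (measureU mu (mD k.+1 m.*2) (mD k.+1 m.*2.+1) (dyadicI k m)).
Qed.

Lemma intR_ge0 (f : R -> R) : (forall x, 0 <= f x) -> 0 <= intR mu f.
Proof. by move=> f_ge0; rewrite fine_ge0 // integral_ge0 // => x _; rewrite lee_fin. Qed.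

Lemma integral_supp (f : R -> R) D : (forall x, ~ D x -> f x = 0) ->
  (\int[mu]_(x in D) (f x)%:E = \int[mu]_x (f x)%:E)%E.
Proof.
move=> f_supp; rewrite integral_mkcond; apply: eq_integral => x _; rewrite /patch.
by case: ifPn => // /negP xD; rewrite f_supp // => Dx; apply: xD; rewrite inE.
Qed.

Section BoundedIntegrand.
Variables (f : R -> R) (B : R).
Hypotheses (mf : measurable_fun setT f) (f_bd : forall x, 0 <= f x <= B).

Let f_ge0 x : (0 <= (f x)%:E)%E.
Proof. by rewrite lee_fin; case/andP: (f_bd x). Qed.

Lemma intRE : (\int[mu]_x (f x)%:E)%E = (intR mu f)%:E.
Proof.
have int_le : (\int[mu]_x (f x)%:E <= B%:E)%E.
  rewrite -[B%:E]mule1 -(probability_setT mu) -integral_cst //.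
  apply: ge0_le_integral => //; first exact/measurable_EFinP.
  by move=> x _; rewrite lee_fin; case/andP: (f_bd x).
rewrite /intR fineK // ge0_fin_numE ?(le_lt_trans int_le) ?ltry //.
exact: integral_ge0.
Qed.

Lemma intR_le_supp D : measurable D -> (forall x, ~ D x -> f x = 0) ->
  intR mu f <= B * mR mu D.
Proof.
move=> mD f_supp; rewrite -lee_fin -intRE EFinM mRE // -integral_cst //.
rewrite -(integral_supp f_supp).
apply: ge0_le_integral => //.
  by apply/measurable_EFinP; apply: measurable_funS mf.
by move=> x _; rewrite lee_fin; case/andP: (f_bd x).
Qed.

End BoundedIntegrand.

Lemma intRD (f g : R -> R) B : measurable_fun setT f -> measurable_fun setT g ->
  (forall x, 0 <= f x <= B) -> (forall x, 0 <= g x <= B) ->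
  intR mu (f \+ g) = intR mu f + intR mu g.
Proof.
move=> mf mg f_bd g_bd; rewrite /intR; under eq_integral do rewrite /= EFinD.
rewrite ge0_integralD //.
- by rewrite (intRE mf f_bd) (intRE mg g_bd).
- by move=> x _; rewrite lee_fin; case/andP: (f_bd x).
- exact/measurable_EFinP.
- by move=> x _; rewrite lee_fin; case/andP: (g_bd x).
- exact/measurable_EFinP.
Qed.

End Masses.

Section Wasserstein.
Variable R : realType.
Local Notation dyadic := (@dyadic R).

Lemma W1_test_le2 (g : R -> R) y : W1_test g -> `|g y| <= 2.
Proof.
case=> g_lip g_supp; have [y01|y_out] := boolP (0 <= y <= 1); last first.
  by rewrite g_supp ?normr0 // => y01; rewrite y01 in y_out.
have := g_lip y 2; rewrite (g_supp 2) ?subr0; last by case/andP => _ ?; lra.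
by move/le_trans; apply; case/andP: y01 => y_ge0 y_le1; rewrite ler0_norm; lra.
Qed.

Lemma measurable_W1_test_rescaled (g : R -> R) k m : W1_test g ->
  measurable_fun setT (fun x : R => g (2 ^+ k * x - m%:R)).
Proof.
case=> g_lip _; apply: (@lipschitz_measurable _ _ (2 ^+ k)) => x y.
by apply: le_trans (g_lip _ _) _; rewrite opprB addrA subrK -mulrBr normrM ger0_norm.
Qed.

Lemma int_local_le2 (mu : probability R R) k m g : W1_test g ->
  `|int_local mu k m g| <= 2.
Proof.
move=> g_W1; rewrite /int_local; set a := mR mu (dyadic k m).
set z := (\int[mu]_(x in dyadic k m) (g (2 ^+ k * x - m%:R))%:E)%E.
have z_le : (`|z| <= (2 * a)%:E)%E.
  have mg := measurable_W1_test_rescaled k m g_W1.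
  have mI := measurable_dyadic (R:=R) k m.
  apply: le_trans (le_abse_integral _ mI _) _.
    by apply/measurable_EFinP; apply: measurable_funS mg.
  rewrite EFinM /a mRE // -integral_cst //; apply: ge0_le_integral => //.
  - apply: measurableT_comp => //.
    by apply/measurable_EFinP; apply: measurable_funS mg.
  - by move=> x _; rewrite /= lee_fin; exact: W1_test_le2.
have z_fin : z \is a fin_num.
  by rewrite fin_numE; apply/andP; split; apply/eqP => zE; move: z_le; rewrite zE.
have [->|a_neq0] := eqVneq a 0; first by rewrite invr0 mul0r normr0.
have a_gt0 : 0 < a by rewrite lt_neqAle eq_sym a_neq0 mR_ge0.
rewrite normrM ger0_norm ?invr_ge0 ?mR_ge0 // ler_pdivrMl //.
by move: z_le; rewrite -(fineK z_fin) /= lee_fin mulrC.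
Qed.

Lemma alpha_ge (mu nu : probability R R) k m g : W1_test g ->
  `|int_local mu k m g - int_local nu k m g| <= alpha mu nu k m.
Proof.
move=> g_W1; apply: ub_le_sup; last by exists g.
exists 4 => _ [h h_W1 <-]; apply: le_trans (ler_normB _ _) _.
by have := int_local_le2 mu k m h_W1; have := int_local_le2 nu k m h_W1; lra.
Qed.

Lemma alpha_ge0 (mu nu : probability R R) k m : 0 <= alpha mu nu k m.
Proof.
have zero_W1 : W1_test (fun _ : R => 0) by split => [x y|x _]; rewrite ?subrr ?normr0.
apply: le_trans (alpha_ge mu nu k m zero_W1).
by rewrite /int_local !integral0_eq ?mulr0 ?subrr ?normr0.
Qed.

End Wasserstein.

Section Rescaling.
Variables (R : realType) (k m : nat) (f : R -> R) (L B : R).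
Local Notation I := (@dyadic R k m).
Hypotheses (f_bd : forall x, 0 <= f x <= B)
  (f_lip : forall x y, `|f x - f y| <= L * `|x - y|)
  (f_supp : forall x, ~ closure I x -> f x = 0).

Let mf : measurable_fun setT f := lipschitz_measurable f_lip.
Let f_ge0 x : 0 <= f x. Proof. by case/andP: (f_bd x). Qed.
Let t_gt0 : 0 < (2 : R) ^+ k. Proof. exact: exprn_gt0. Qed.

Lemma W1_test_rescaled : 0 < L ->
  W1_test (fun y => 2 ^+ k / L * f ((y + m%:R) / 2 ^+ k)).
Proof.
move=> L_gt0; have s_ge0 : 0 <= 2 ^+ k / L by rewrite divr_ge0 ?exprn_ge0 ?ltW.
split => [x y|y y_out].
  rewrite -mulrBr normrM ger0_norm //; apply: le_trans (ler_wpM2l s_ge0 (f_lip _ _)) _.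
  rewrite -mulrBl opprD addrACA subrr addr0 normrM [`|_^-1|]ger0_norm ?invr_ge0 ?exprn_ge0 //.
  by rewrite le_eqVlt; apply/orP; left; apply/eqP; field; rewrite !gt_eqF.
rewrite f_supp ?mulr0 // => /closure_dyadic /=; rewrite in_itv /= !ler_pM2r ?invr_gt0 //.
by move=> /andP[y_lo y_hi]; apply: y_out; rewrite -natr1 in y_hi; apply/andP; split; lra.
Qed.

Lemma int_local_rescaled (mu : probability R R) : 0 < L ->
  int_local mu k m (fun y => 2 ^+ k / L * f ((y + m%:R) / 2 ^+ k))
  = (mR mu I)^-1 * (2 ^+ k / L * intR mu f).
Proof.
move=> L_gt0; rewrite /int_local; congr (_ * _).
under eq_integral => x _ do rewrite subrK [_ * x]mulrC mulfK ?gt_eqF // EFinM.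
rewrite ge0_integralZl //.
- rewrite integral_supp; last exact: lipschitz_dyadic_support f_lip f_supp.
  by rewrite (intRE mu mf f_bd).
- exact: measurable_dyadic.
- by apply/measurable_EFinP; apply: measurable_funS mf.
- by move=> x _; rewrite lee_fin.
- by rewrite lee_fin divr_ge0 ?ltW.
Qed.

Lemma intR_ratio_le_alpha (mu nu : probability R R) : 0 < mR nu I ->
  `|intR mu f - mR mu I / mR nu I * intR nu f|
    <= L / 2 ^+ k * alpha mu nu k m * mR mu I.
Proof.
move=> b_gt0; set a := mR mu I; set b := mR nu I.
have [L0|L_gt0] : L = 0 \/ 0 < L.
  by rewrite lt_neqAle eq_sym (lipschitz_ge0 f_lip) andbT; case: eqVneq; [left|right].
  have f0 : f = fun _ => 0.
    apply/funext => x; have := f_lip x (-1); rewrite L0 mul0r normr_le0 subr_eq0.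
    move=> /eqP ->; apply: f_supp => /closure_dyadic /=; rewrite in_itv /= => /andP[+ _].
    by have := divr_ge0 (ler0n R m) (ltW t_gt0); lra.
  by rewrite f0 /intR !integral0_eq // mulr0 subrr normr0 L0 !mul0r.
have [a0|a_gt0] : a = 0 \/ 0 < a.
  by rewrite lt_neqAle eq_sym mR_ge0 andbT; case: eqVneq; [left|right].
  have Qm0 : intR mu f = 0.
    apply/eqP; rewrite eq_le intR_ge0 // andbT.
    have := intR_le_supp mu mf f_bd (measurable_dyadic k m)
      (lipschitz_dyadic_support f_lip f_supp).
    by rewrite -/a a0 mulr0.
  by rewrite Qm0 a0 !mul0r subrr normr0 mulr0.
have := alpha_ge mu nu k m (W1_test_rescaled L_gt0).
rewrite !int_local_rescaled // -/a -/b.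
set Qm := intR mu f; set Qn := intR nu f; set s := 2 ^+ k / L.
have s_gt0 : 0 < s by rewrite divr_gt0.
have -> : a^-1 * (s * Qm) - b^-1 * (s * Qn) = s * (Qm / a - Qn / b).
  by field; rewrite !gt_eqF.
have -> : Qm - a / b * Qn = a * (Qm / a - Qn / b) by field; rewrite !gt_eqF.
rewrite normrM (gtr0_norm s_gt0) => s_le_alpha.
rewrite normrM (gtr0_norm a_gt0) mulrC ler_pM2r // -(ler_pM2l s_gt0) mulrA.
by rewrite (_ : s * (L / 2 ^+ k) = 1) ?mul1r // /s; field; rewrite !gt_eqF.
Qed.

End Rescaling.

Lemma child_ratio_sub (R : realFieldType) (a l b lb aJ bJ : R) :
  0 <= l <= a -> 0 <= lb <= b -> 0 < bJ ->
  (aJ = l /\ bJ = lb) \/ (aJ = a - l /\ bJ = b - lb) ->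
  `|aJ / bJ - a / b| = bJ^-1 * `|l / a - lb / b| * a.
Proof.
move=> /andP[l_ge0 l_le] /andP[lb_ge0 lb_le] bJ_gt0 aJbJ.
have b_gt0 : 0 < b by case: aJbJ => -[_ bJE]; lra.
have /predU1P[a0|a_gt0] : (0 == a) || (0 < a) by rewrite -le_eqVlt (le_trans l_ge0).
  have -> : aJ = 0 by case: aJbJ => -[-> _]; lra.
  by rewrite -a0 !mul0r subrr normr0 mulr0.
have -> : `|l / a - lb / b| = `|aJ / a - bJ / b|.
  case: aJbJ => -[-> ->] //; rewrite -normrN; congr `|_|.
  by field; rewrite !gt_eqF.
rewrite (_ : aJ / bJ - a / b = a / bJ * (aJ / a - bJ / b)); last by field; rewrite !gt_eqF.
by rewrite normrM (ger0_norm (divr_ge0 (ltW a_gt0) (ltW bJ_gt0))); ring.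
Qed.

Lemma Delta_child (R : realType) (mu nu : probability R R) k m m' :
  m'./2 = m -> 0 < mR nu (dyadic (R:=R) k.+1 m') ->
  `|mR mu (dyadic k.+1 m') / mR nu (dyadic k.+1 m')
    - mR mu (dyadic k m) / mR nu (dyadic k m)|
  = (mR nu (dyadic k.+1 m'))^-1 * Delta mu nu k m * mR mu (dyadic k m).
Proof.
move=> half_m' nuJ_gt0; apply: child_ratio_sub => //.
- by rewrite mR_ge0 (mR_dyadicU mu k m) lerDl mR_ge0.
- by rewrite mR_ge0 (mR_dyadicU nu k m) lerDl mR_ge0.
have m'E : m' = (m.*2 + odd m')%N by rewrite -half_m' addnC odd_double_half.
rewrite m'E (mR_dyadicU mu k m) (mR_dyadicU nu k m).
by case: (odd m'); [right|left]; rewrite ?addn0 ?addn1; split => //; ring.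
Qed.

Lemma doubling_dyadic_gt0 (R : realType) (nu : probability R R) (D : R) :
  nu (dyadic (R:=R) 0 0) = 1%E ->
  (forall k m : nat, (m < 2 ^ k.+1)%N ->
     (nu (dyadic (R:=R) k m./2) <= D%:E * nu (dyadic (R:=R) k.+1 m))%E) ->
  forall k m, (m < 2 ^ k)%N -> 0 < mR nu (dyadic (R:=R) k m).
Proof.
move=> nu1 doubling; elim=> [|k IH] m.
  by rewrite expn0 ltnS leqn0 => /eqP ->; rewrite /mR nu1.
move=> m_lt; have le_parent : mR nu (dyadic k m./2) <= D * mR nu (dyadic k.+1 m).
  by rewrite -lee_fin EFinM !mRE; [exact: doubling | exact: measurable_dyadic..].
have parent_gt0 : 0 < mR nu (dyadic k m./2).
  by apply: IH; rewrite -divn2 ltn_divLR // -expnSr.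
rewrite lt_neqAle mR_ge0 andbT eq_sym; apply: contraTneq parent_gt0 => child0.
by rewrite -leNgt (le_trans le_parent) // child0 mulr0.
Qed.

Section Tails.
Variables (R : realType) (psi : nat -> R -> R) (M : R).
Hypothesis psi_ge0 : forall j x, 0 <= psi j x.
Hypothesis sum_psi_le : forall x, (\sum_(0 <= j <oo) (psi j x)%:E <= M%:E)%E.

Let psiE_ge0 x j : (0 <= (psi j x)%:E)%E. Proof. by rewrite lee_fin. Qed.

Lemma tail_le_sum k x :
  (\sum_(k <= j <oo) (psi j x)%:E <= \sum_(0 <= j <oo) (psi j x)%:E)%E.
Proof.
rewrite [leRHS](@nneseries_split _ _ 0 k) // add0n leeDr //.
exact: sume_ge0.
Qed.

Lemma Psi_fromE k x : (Psi_from psi k x)%:E = (\sum_(k <= j <oo) (psi j x)%:E)%E.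
Proof.
rewrite /Psi_from fineK // ge0_fin_numE; last exact: nneseries_ge0.
by rewrite (le_lt_trans (tail_le_sum k x)) // (le_lt_trans (sum_psi_le x)) ?ltry.
Qed.

Lemma Psi_fromS k : Psi_from psi k = psi k \+ Psi_from psi k.+1.
Proof.
apply/funext => x; apply: EFin_inj; rewrite EFinD !Psi_fromE.
by rewrite (@nneseries_split _ _ k 1) // addn1 big_nat1.
Qed.

Lemma Psi_from_ge0 k x : 0 <= Psi_from psi k x.
Proof. by rewrite -lee_fin Psi_fromE; exact: nneseries_ge0. Qed.

Lemma Psi_from_le k x : Psi_from psi k x <= Psi_from psi 0 x.
Proof. by rewrite -lee_fin !Psi_fromE; exact: tail_le_sum. Qed.

Lemma psi_le_Psi_from k x : psi k x <= Psi_from psi k x.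
Proof. by rewrite Psi_fromS /= lerDl Psi_from_ge0. Qed.

Lemma Psi_le_supnorm x : Psi_from psi 0 x <= supnorm (Psi_from psi 0).
Proof.
apply: le_trans (ler_norm _) _; apply: ub_le_sup; last by exists x.
exists M => _ [y _ <-]; rewrite ger0_norm ?Psi_from_ge0 //.
by rewrite -lee_fin Psi_fromE.
Qed.

Lemma Psi_from_eq0 k x : (forall j, (k <= j)%N -> psi j x = 0) ->
  Psi_from psi k x = 0.
Proof.
by move=> psi0; apply: EFin_inj; rewrite Psi_fromE; apply: eseries0 => j /psi0 ->.
Qed.

Lemma measurable_Psi_from k : (forall j, measurable_fun setT (psi j)) ->
  measurable_fun setT (Psi_from psi k).
Proof.
move=> mpsi; apply/measurable_EFinP.
rewrite (_ : EFin \o _ = fun x => \sum_(j <oo | (k <= j)%N) (psi j x)%:E)%E.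
  by apply: ge0_emeasurable_sum => // j _; exact/measurable_EFinP.
by apply/funext => x /=; rewrite Psi_fromE (@eseries_cond _ _ xpredT).
Qed.

End Tails.

Section Telescoping.
Variables (R : realType) (mu nu : probability R R) (c : nat -> nat).
Variables (psi : nat -> R -> R) (L : nat -> R) (M : R).
Hypothesis c_nest : forall j, dyadic (R:=R) j.+1 (c j.+1) `<=` dyadic j (c j).
Hypothesis psi_ge0 : forall j x, 0 <= psi j x.
Hypothesis psi_lip : forall j x y, `|psi j x - psi j y| <= L j * `|x - y|.
Hypothesis psi_supp : forall j x, ~ closure (dyadic (R:=R) j (c j)) x -> psi j x = 0.
Hypothesis sum_psi_le : forall x, (\sum_(0 <= j <oo) (psi j x)%:E <= M%:E)%E.
Hypothesis nu_gt0 : forall k, 0 < mR nu (dyadic (R:=R) k (c k)).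

Local Notation I k := (dyadic (R:=R) k (c k)).
Local Notation S := (supnorm (Psi_from psi 0)).

Let ratio k := mR mu (I k) / mR nu (I k).
Let gap k := intR mu (Psi_from psi k) - ratio k * intR nu (Psi_from psi k).

Let psi_measurable j : measurable_fun setT (psi j).
Proof. exact: lipschitz_measurable (psi_lip j). Qed.

Let Psi_from_bd k x : 0 <= Psi_from psi k x <= S.
Proof.
rewrite (Psi_from_ge0 psi_ge0 sum_psi_le) (le_trans (Psi_from_le psi_ge0 sum_psi_le _ _)) //.
exact: Psi_le_supnorm.
Qed.

Let psi_bd k x : 0 <= psi k x <= S.
Proof.
rewrite psi_ge0 (le_trans (psi_le_Psi_from psi_ge0 sum_psi_le k x)) //.
by case/andP: (Psi_from_bd k x).
Qed.

Let Psi_from_supp k x : ~ I k x -> Psi_from psi k x = 0.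
Proof.
move=> x_out; apply: (Psi_from_eq0 psi_ge0 sum_psi_le) => j kj.
apply: (lipschitz_dyadic_support (psi_lip j) (@psi_supp j)).
by move=> /(dyadic_chain_subset c_nest kj).
Qed.

Let intR_Psi_fromS (P : probability R R) k :
  intR P (Psi_from psi k) = intR P (psi k) + intR P (Psi_from psi k.+1).
Proof.
rewrite {1}(Psi_fromS psi_ge0 sum_psi_le k).
apply: (intRD P (psi_measurable k) _ (psi_bd k) (Psi_from_bd k.+1)).
exact: measurable_Psi_from psi_ge0 sum_psi_le _ psi_measurable.
Qed.

Let intR_Psi_from_le (P : probability R R) k : intR P (Psi_from psi k) <= S * mR P (I k).
Proof.
apply: (intR_le_supp P _ (Psi_from_bd k) (measurable_dyadic _ _) (@Psi_from_supp k)).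
exact: measurable_Psi_from psi_ge0 sum_psi_le _ psi_measurable.
Qed.

Let intR_Psi_from_ge0 (P : probability R R) k : 0 <= intR P (Psi_from psi k).
Proof. by apply: intR_ge0 => x; case/andP: (Psi_from_bd k x). Qed.

Lemma gap_step k :
  `|gap k| <= L k / 2 ^+ k * alpha mu nu k (c k) * mR mu (I k)
    + ((mR nu (I k.+1))^-1 * intR nu (Psi_from psi k.+1))
      * Delta mu nu k (c k) * mR mu (I k)
    + `|gap k.+1|.
Proof.
have gapE : gap k = (intR mu (psi k) - ratio k * intR nu (psi k))
    + (ratio k.+1 - ratio k) * intR nu (Psi_from psi k.+1) + gap k.+1.
  by rewrite /gap (intR_Psi_fromS mu k) (intR_Psi_fromS nu k); ring.
rewrite gapE; apply: le_trans (ler_normD _ _) _; rewrite lerD2r.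
apply: le_trans (ler_normD _ _) _; apply: lerD.
  exact: intR_ratio_le_alpha (psi_bd k) (psi_lip k) (@psi_supp k) _ _ (nu_gt0 k).
rewrite normrM (ger0_norm (intR_Psi_from_ge0 nu k.+1)) /ratio.
have half_c := dyadic_subset_half (@c_nest k); have nuJ_gt0 := nu_gt0 k.+1.
by rewrite Delta_child // le_eqVlt; apply/orP; left; apply/eqP; ring.
Qed.

Lemma gap_telescope n :
  `|gap 0| <= \sum_(0 <= k < n) (L k / 2 ^+ k * alpha mu nu k (c k) * mR mu (I k))
    + \sum_(0 <= k < n) ((mR nu (I k.+1))^-1 * intR nu (Psi_from psi k.+1)
                         * Delta mu nu k (c k) * mR mu (I k))
    + `|gap n|.
Proof.
elim: n => [|n IH]; first by rewrite !big_geq // !add0r.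
apply: le_trans IH _; rewrite !big_nat_recr //= -!addrA lerD2l addrCA lerD2l addrA.
exact: gap_step.
Qed.

Lemma gap_le n : `|gap n| <= 2 * S * mR mu (I n).
Proof.
have ratio_ge0 : 0 <= ratio n by rewrite divr_ge0 ?mR_ge0.
apply: le_trans (ler_normB _ _) _.
rewrite normrM !ger0_norm ?intR_Psi_from_ge0 //.
have := ler_wpM2l ratio_ge0 (intR_Psi_from_le nu n).
rewrite (_ : ratio n * (S * mR nu (I n)) = S * mR mu (I n)); last first.
  by rewrite /ratio; field; rewrite gt_eqF.
by have := intR_Psi_from_le mu n; lra.
Qed.

End Telescoping.

Lemma le_series_bigcap (R : realType) (mu : probability R R) (A : nat -> set R)
    (u v : nat -> R) (C x : R) :
  (forall k, 0 <= u k) -> (forall k, 0 <= v k) -> 0 <= C ->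
  (forall k, measurable (A k)) -> {homo A : k n / (k <= n)%N >-> n `<=` k} ->
  (forall N, x <= \sum_(0 <= k < N.+1) u k + \sum_(0 <= k < N.+1) v k
                  + C * mR mu (A N.+1)) ->
  (x%:E <= \sum_(0 <= k <oo) (u k)%:E + \sum_(0 <= k <oo) (v k)%:E
           + (C * mR mu (\bigcap_j A j))%:E)%E.
Proof.
move=> u_ge0 v_ge0 C_ge0 mA A_nonincr x_le.
have mAcap : measurable (\bigcap_j A j) by exact: bigcapT_measurable.
set su := (\sum_(0 <= k <oo) (u k)%:E)%E; set sv := (\sum_(0 <= k <oo) (v k)%:E)%E.
have su_sv_ge0 : (0 <= su + sv)%E.
  by rewrite adde_ge0 // nneseries_ge0 // => k _ _; rewrite lee_fin.
have mu_cvg : mu \o A @ \oo --> mu (\bigcap_j A j).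
  apply: nonincreasing_cvg_mu => //; first by rewrite (le_lt_trans (probability_le1 _ _)) ?ltry.
  by move=> k n kn; apply/subsetPset/A_nonincr.
have bound_cvg : (fun n => su + sv + C%:E * mu (A n))%E @ \oo -->
                 (su + sv + C%:E * mu (\bigcap_j A j))%E.
  apply: cvgeD; [|exact: cvg_cst|exact: cvgeZl mu_cvg].
  by apply: ge0_adde_def; rewrite inE // mule_ge0 // lee_fin.
rewrite EFinM mRE //; apply: (cvge_to_ge bound_cvg).
near=> n; have [N ->] : exists N, n = N.+1.
  by exists n.-1; rewrite prednK //; near: n; exists 1%N.
apply: le_trans (_ : _ <= (\sum_(0 <= k < N.+1) u k + \sum_(0 <= k < N.+1) v k
  + C * mR mu (A N.+1))%:E)%E _; first by rewrite lee_fin.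
rewrite !EFinD EFinM mRE // -!sumEFin; apply: leeD => //; apply: leeD.
- by apply: nneseries_lim_ge => k _ _; rewrite lee_fin.
- by apply: nneseries_lim_ge => k _ _; rewrite lee_fin.
Unshelve. all: by end_near.
Qed.

Theorem mainTheorem13 (R : realType) (mu nu : probability R R) (D : R)
  (c : nat -> nat) (psi : nat -> R -> R) (L : nat -> R) :
  (* mu, nu are concentrated on [0,1) *)
  mu (dyadic (R:=R) 0 0) = 1%E -> nu (dyadic (R:=R) 0 0) = 1%E ->
  (* nu is dyadically doubling: nu(parent I) <= D nu(I), I <> [0,1) *)
  (forall k m : nat, (m < 2 ^ k.+1)%N ->
     (nu (dyadic (R:=R) k m./2) <= D%:E * nu (dyadic (R:=R) k.+1 m))%E) ->
  (* nested dyadic intervals I_j = dyadic j (c j) of length 2^-j *)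
  (forall j, (c j < 2 ^ j)%N) ->
  (forall j, dyadic (R:=R) j.+1 (c j.+1) `<=` dyadic (R:=R) j (c j)) ->
  (forall j x, 0 <= psi j x) ->
  (forall j x y, `|psi j x - psi j y| <= L j * `|x - y|) ->
  (forall j x, ~ closure (dyadic (R:=R) j (c j)) x -> psi j x = 0) ->
  (exists M : R, forall x, (\sum_(0 <= j <oo) (psi j x)%:E <= M%:E)%E) ->
  let Psi := Psi_from psi 0 in
  let I k := dyadic (R:=R) k (c k) in
  let t1 k := L k / 2 ^+ k * alpha mu nu k (c k) * mR mu (I k) in
  let t2 k := ((mR nu (I k.+1))^-1 * intR nu (Psi_from psi k.+1))
              * Delta mu nu k (c k) * mR mu (I k) in
  (forall N : nat,
     `|intR mu Psi - intR nu Psi|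
       <= \sum_(0 <= k < N.+1) t1 k + \sum_(0 <= k < N.+1) t2 k
          + 2 * supnorm Psi * mR mu (I N.+1))
  /\
  ((`|intR mu Psi - intR nu Psi|)%:E
     <= \sum_(0 <= k <oo) (t1 k)%:E + \sum_(0 <= k <oo) (t2 k)%:E
        + (2 * supnorm Psi * mR mu (\bigcap_j I j))%:E)%E.
Proof.
move=> mu1 nu1 doubling c_lt c_nest psi_ge0 psi_lip psi_supp [M sum_psi_le] Psi I t1 t2.
have nu_gt0 k : 0 < mR nu (I k) by exact: doubling_dyadic_gt0 nu1 doubling _ _ (c_lt k).
have c0 : c 0 = 0%N by apply/eqP; rewrite -leqn0 -ltnS -(expn0 2) c_lt.
have I0_mass (P : probability R R) : P (dyadic 0 0) = 1%E -> mR P (I 0) = 1.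
  by rewrite /I c0 /mR => ->.
have finite N : `|intR mu Psi - intR nu Psi|
    <= \sum_(0 <= k < N.+1) t1 k + \sum_(0 <= k < N.+1) t2 k
       + 2 * supnorm Psi * mR mu (I N.+1).
  have := gap_le mu c_nest psi_ge0 psi_lip psi_supp sum_psi_le nu_gt0 N.+1.
  have := gap_telescope mu c_nest psi_ge0 psi_lip psi_supp sum_psi_le nu_gt0 N.+1.
  rewrite -/(I 0) (I0_mass mu mu1) (I0_mass nu nu1) divr1 mul1r.
  by move=> gap0_le gap_le; apply: le_trans gap0_le _; apply: lerD.
split => //; apply: le_series_bigcap finite => [k|k||k|].
- rewrite /t1 !mulr_ge0 ?alpha_ge0 ?mR_ge0 ?invr_ge0 ?exprn_ge0 //.
  exact: lipschitz_ge0 (psi_lip k).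
- rewrite /t2 /Delta !mulr_ge0 ?invr_ge0 ?mR_ge0 ?intR_ge0 //.
  exact: Psi_from_ge0 psi_ge0 sum_psi_le _.
- rewrite mulr_ge0 // (le_trans (Psi_from_ge0 psi_ge0 sum_psi_le 0 0)) //.
  exact: Psi_le_supnorm psi_ge0 sum_psi_le _.
- exact: measurable_dyadic.
- exact: dyadic_chain_subset c_nest.
Qed.
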